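(* Let $n\ge1$ and $0\le \bar s\le n$. Then $$\max\Big\{\prod_{i=1}^n(1+z_i^2)\ :\ z_1,\dots,z_n\in[0,1],\ \sum_{i=1}^n z_i=\bar s\Big\}=2^{\lfloor \bar s\rfloor}\big[1+(\bar s-\lfloor\bar s\rfloor)^2\big],$$ equivalently the maximum of $1+\sum_{k=1}^n\sum_{1\le i_1<\cdots<i_k\le n}z_{i_1}^2\cdots z_{i_k}^2$ over this set equals the same value.
   Context: $\lfloor x\rfloor$ denotes the greatest integer less than or equal to $x$. *)

From Stdlib Require Import Reals.
Open Scope R_scope.

Fixpoint rsum (z : nat -> R) (n : nat) : R :=
  match n with O => 0 | S k => rsum z k + z k end.

Fixpoint rprod (f : nat -> R) (n : nat) : R :=
  match n with O => 1 | S k => rprod f k * f k end.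

(* floor of a real: Int_part x = up x - 1 is the greatest integer <= x. *)
Definition rfloor (x : R) : Z := Int_part x.

From Stdlib Require Import Reals Lra Lia Psatz ZArith.
Open Scope R_scope.

(* The bound [max_prod s] is a function of the running sum alone, and adding one
   more coordinate [z] in [0, 1] to the sum multiplies it by at least [1 + z^2]:
   either the fractional part [f] of the sum does not overflow, and
   [(1 + f^2)(1 + z^2) <= 1 + (f + z)^2], or it overflows, and
   [(1 + f^2)(1 + z^2) <= 2 (1 + (f + z - 1)^2)].  Induction on [n] then bounds
   the product; filling the coordinates greedily with [1]s and one last
   fractional coordinate attains the bound. *)

Definition max_prod (s : R) : R :=
  powerRZ 2 (rfloor s) * (1 + (s - IZR (rfloor s)) ^ 2).

Lemma rfloor_spec (x : R) : IZR (rfloor x) <= x < IZR (rfloor x) + 1.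
Proof. unfold rfloor. destruct (base_Int_part x). lra. Qed.

Lemma rfloor_unique (k : Z) (x : R) : IZR k <= x < IZR k + 1 -> rfloor x = k.
Proof.
  intros [Hk Hx]. unfold rfloor, Int_part.
  rewrite <- (tech_up x (k + 1)); rewrite ?plus_IZR; simpl; lra || ring.
Qed.

Lemma powerRZ_2_succ (k : Z) : powerRZ 2 (k + 1) = 2 * powerRZ 2 k.
Proof. rewrite powerRZ_add by lra. simpl. ring. Qed.

Lemma sq_prod_le_no_carry (f z : R) :
  0 <= f -> 0 <= z -> f * z <= 2 -> (1 + f ^ 2) * (1 + z ^ 2) <= 1 + (f + z) ^ 2.
Proof. intros Hf Hz Hfz. assert (0 <= f * z) by nra. nra. Qed.

Lemma sq_prod_le_carry (f z : R) :
  0 <= f <= 1 -> 0 <= z <= 1 -> 1 <= f + z ->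
  (1 + f ^ 2) * (1 + z ^ 2) <= 2 * (1 + (f + z - 1) ^ 2).
Proof.
  intros Hf Hz Hfz.
  (* the difference of the two sides factors as below *)
  assert (0 <= (1 - z) * (1 - f) * ((3 - z) - (1 + z) * f)).
  { apply Rmult_le_pos; [apply Rmult_le_pos|]; nra. }
  nra.
Qed.

Lemma max_prod_unit (s : R) : 0 <= s <= 1 -> max_prod s = 1 + s ^ 2.
Proof.
  intros Hs. unfold max_prod. destruct (Req_dec s 1) as [->|Hs1].
  - rewrite (rfloor_unique 1 1) by (simpl; lra). simpl. ring.
  - rewrite (rfloor_unique 0 s) by (simpl; lra). simpl. ring.
Qed.

Lemma max_prod_succ (s : R) : max_prod (s + 1) = 2 * max_prod s.
Proof.
  unfold max_prod. destruct (rfloor_spec s).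
  rewrite (rfloor_unique (rfloor s + 1) (s + 1)) by (rewrite plus_IZR; simpl; lra).
  rewrite powerRZ_2_succ, plus_IZR. simpl. ring.
Qed.

Lemma max_prod_mul_le (s z : R) :
  0 <= z <= 1 -> max_prod s * (1 + z ^ 2) <= max_prod (s + z).
Proof.
  intros Hz. unfold max_prod. destruct (rfloor_spec s) as [Hk1 Hk2].
  set (k := rfloor s) in *. set (f := s - IZR k).
  assert (Hf : 0 <= f < 1) by (unfold f; lra).
  assert (HP : 0 < powerRZ 2 k) by (apply powerRZ_lt; lra).
  rewrite Rmult_assoc.
  destruct (Rlt_or_le (f + z) 1) as [Hfz|Hfz].
  - rewrite (rfloor_unique k (s + z)) by (unfold f in *; lra).
    replace (s + z - IZR k) with (f + z) by (unfold f; ring).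
    apply Rmult_le_compat_l; [lra|].
    apply sq_prod_le_no_carry; nra.
  - rewrite (rfloor_unique (k + 1) (s + z)) by (rewrite plus_IZR; unfold f in *; simpl; lra).
    rewrite powerRZ_2_succ, plus_IZR.
    replace (s + z - (IZR k + IZR 1)) with (f + z - 1) by (unfold f; simpl; ring).
    rewrite (Rmult_comm 2), Rmult_assoc. apply Rmult_le_compat_l; [lra|].
    apply sq_prod_le_carry; lra.
Qed.

Lemma rprod_le_max_prod (n : nat) (z : nat -> R) :
  (forall i, (i < n)%nat -> 0 <= z i <= 1) ->
  rprod (fun i => 1 + z i ^ 2) n <= max_prod (rsum z n).
Proof.
  induction n as [|n IH]; intros Hz; simpl.
  - rewrite max_prod_unit by lra. lra.
  - apply Rle_trans with (max_prod (rsum z n) * (1 + z n ^ 2)).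
    + apply Rmult_le_compat_r; [nra|]. apply IH. intros i Hi. apply Hz. lia.
    + apply max_prod_mul_le, Hz. lia.
Qed.

Lemma rsum_ext (n : nat) (z w : nat -> R) :
  (forall i, (i < n)%nat -> z i = w i) -> rsum z n = rsum w n.
Proof. induction n; intros H; simpl; auto. rewrite IHn, H; auto. Qed.

Lemma rprod_ext (n : nat) (f g : nat -> R) :
  (forall i, (i < n)%nat -> f i = g i) -> rprod f n = rprod g n.
Proof. induction n; intros H; simpl; auto. rewrite IHn, H; auto. Qed.

Lemma max_prod_attained (n : nat) (s : R) : 0 <= s <= INR n ->
  exists z : nat -> R,
    (forall i, (i < n)%nat -> 0 <= z i <= 1) /\ rsum z n = s /\
    rprod (fun i => 1 + z i ^ 2) n = max_prod s.
Proof.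
  revert s. induction n as [|n IH]; intros s Hs.
  - simpl in Hs. assert (s = 0) by lra. subst s.
    exists (fun _ => 0). repeat split; intros; try lia.
    simpl. rewrite max_prod_unit by lra. ring.
  - rewrite S_INR in Hs. pose proof (pos_INR n).
    set (t := Rmin s 1).
    assert (Ht : 0 <= t <= 1 /\ 0 <= s - t <= INR n).
    { unfold t. destruct (Rle_dec s 1); [rewrite Rmin_left|rewrite Rmin_right]; lra. }
    destruct (IH (s - t) (proj2 Ht)) as [z [Hz [Hsum Hprod]]].
    set (z' := fun i => if Nat.eqb i n then t else z i).
    assert (Hz' : forall i, (i < n)%nat -> z' i = z i).
    { intros i Hi. unfold z'. destruct (Nat.eqb_spec i n); [lia|auto]. }
    assert (Hzn : z' n = t) by (unfold z'; rewrite Nat.eqb_refl; auto).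
    exists z'. split; [|split].
    + intros i Hi. destruct (Nat.eq_dec i n) as [->|Hin]; [lra|].
      rewrite Hz' by lia. apply Hz. lia.
    + simpl. rewrite (rsum_ext n z' z Hz'), Hzn. lra.
    + simpl. rewrite (rprod_ext n _ (fun i => 1 + z i ^ 2)) by (intros; rewrite Hz'; auto).
      rewrite Hprod, Hzn. unfold t.
      destruct (Rle_dec s 1).
      * rewrite Rmin_left, Rminus_diag, !max_prod_unit by lra. ring.
      * rewrite Rmin_right by lra.
        replace s with ((s - 1) + 1) at 2 by ring. rewrite max_prod_succ. ring.
Qed.

Theorem mainTheorem11 (n : nat) (s : R) :
  (1 <= n)%nat -> 0 <= s -> s <= INR n ->
  (exists z : nat -> R,
      (forall i, (i < n)%nat -> 0 <= z i <= 1) /\ rsum z n = s /\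
      rprod (fun i => 1 + z i ^ 2) n
        = powerRZ 2 (rfloor s) * (1 + (s - IZR (rfloor s)) ^ 2)) /\
  (forall z : nat -> R,
      (forall i, (i < n)%nat -> 0 <= z i <= 1) -> rsum z n = s ->
      rprod (fun i => 1 + z i ^ 2) n
        <= powerRZ 2 (rfloor s) * (1 + (s - IZR (rfloor s)) ^ 2)).
Proof.
  intros _ Hs0 Hsn. split.
  - apply max_prod_attained. lra.
  - intros z Hz Hsum. rewrite <- Hsum. apply rprod_le_max_prod. exact Hz.
Qed.
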